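(* Let $A=A^\top\in\mathbb{R}^{3\times3}$ be positive definite, $u\in\mathbb{S}^2$, and $\gamma>0$. Let $\mathcal{T}(R,\theta)=R\,\mathcal{R}_a(\theta,u)$ and $$U(R,\theta)=\mathrm{tr}\big(A(I_3-\mathcal{T}(R,\theta))\big)+\tfrac{\gamma}{2}\theta^2 .$$ Consider trajectories generated by $\dot R=R\omega^\times$ and $\dot\theta=v$ with $R(0)\in SO(3)$, $\theta(0)\in\mathbb{R}$, $\omega\in\mathbb{R}^3$, $v\in\mathbb{R}$. Then for all $(R,\theta)\in SO(3)\times\mathbb{R}$: 1. $\dot{\mathcal{T}}(R,\theta)=\mathcal{T}(R,\theta)\big(\mathcal{R}_a(\theta,u)^\top\omega+vu\big)^\times$; 2. $\psi(R^\top\nabla_RU(R,\theta))=\mathcal{R}_a(\theta,u)\,\psi(A\mathcal{T}(R,\theta))$; 3. $\nabla_\theta U(R,\theta)=\gamma\theta+2u^\top\psi(A\mathcal{T}(R,\theta))$; 4. the critical set of $U$ is $\Psi_U=\Psi_V\times\{0\}$, and in particular $(I_3,0)\in\Psi_U$; 5. $\tfrac{d}{dt}\psi(R^\top\nabla_RU(R,\theta))=\mathcal{D}_R(R,\theta)\,\omega+\mathcal{D}_\theta(R,\theta)\,v$, where $$\mathcal{D}_R(R,\theta)=\mathcal{R}_a(\theta,u)\,E(A\mathcal{T}(R,\theta))\,\mathcal{R}_a(\theta,u)^\top,$$ $$\mathcal{D}_\theta(R,\theta)=\mathcal{R}_a(\theta,u)\,E(A\mathcal{T}(R,\theta))\,u-\big(\mathcal{R}_a(\theta,u)\,\psi(A\mathcal{T}(R,\theta))\big)^\times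 u,$$ and $E(B)=\tfrac12(\mathrm{tr}(B)I_3-B^\top)$ for $B\in\mathbb{R}^{3\times3}$.
   Context: Notation. - $\mathcal{R}_a(\theta,u)=I_3+\sin\theta\,u^\times+(1-\cos\theta)(u^\times)^2$ is the rotation by angle $\theta$ about the unit axis $u$. - $x^\times$ is the skew-symmetric matrix with $x^\times y=x\times y$. - For $B=[b_{ij}]$, $\psi(B)=\tfrac12[b_{32}-b_{23},b_{13}-b_{31},b_{21}-b_{12}]^\top$. - $\nabla_RU(R,\theta)\in T_RSO(3)=\{R\Omega:\Omega^\top=-\Omega\}$ is the gradient in $R$ with respect to the metric $\langle R\Omega_1,R\Omega_2\rangle_R=\mathrm{tr}(\Omega_1^\top\Omega_2)$, and $\nabla_\theta U$ is the partial derivative in $\theta$. - The critical set is $\Psi_U=\{(R,\theta):\nabla_RU(R,\theta)=0,\ \nabla_\theta U(R,\theta)=0\}$. - $\Psi_V=\{I_3\}\cup\{\mathcal{R}_a(\pi,w):w\in\mathcal{E}(A)\}$, where $\mathcal{E}(A)$ is the set of all unit eigenvectors of $A$. *)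

From HB Require Import structures.
From mathcomp Require Import all_boot all_order all_algebra.
From mathcomp Require Import all_classical all_reals all_analysis.
Set Implicit Arguments. Unset Strict Implicit. Unset Printing Implicit Defensive.
Import Order.TTheory GRing.Theory Num.Theory.
Import numFieldNormedType.Exports.
Local Open Scope ring_scope.
Local Open Scope classical_set_scope.

Section Defs.
Variable R : realType.

Definition vc (x : 'cV[R]_3) (k : nat) : R := x (@inord 2 k) 0.
Definition mc (B : 'M[R]_3) (i j : nat) : R := B (@inord 2 i) (@inord 2 j).

(* x^\times : the crossm-symmetric matrix with x^\times y = x \times y *)
Definition crossm (x : 'cV[R]_3) : 'M[R]_3 :=
  \matrix_(i < 3, j < 3)
    match nat_of_ord i, nat_of_ord j with
    | 0, 1 => - vc x 2 | 0, 2 => vc x 1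
    | 1, 0 => vc x 2   | 1, 2 => - vc x 0
    | 2, 0 => - vc x 1 | 2, 1 => vc x 0
    | _, _ => 0
    end.

Definition psi (B : 'M[R]_3) : 'cV[R]_3 :=
  \col_(i < 3)
    match nat_of_ord i with
    | 0 => 2^-1 * (mc B 2 1 - mc B 1 2)
    | 1 => 2^-1 * (mc B 0 2 - mc B 2 0)
    | _ => 2^-1 * (mc B 1 0 - mc B 0 1)
    end.

(* Rodrigues formula R_a(theta, u) *)
Definition Ra (th : R) (u : 'cV[R]_3) : 'M[R]_3 :=
  1 + sin th *: crossm u + (1 - cos th) *: (crossm u *m crossm u).

Definition Emat (B : 'M[R]_3) : 'M[R]_3 := 2^-1 *: (\tr B *: 1 - B^T).

Definition SO3 (Q : 'M[R]_3) : Prop := Q^T *m Q = 1 /\ \det Q = 1.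

Definition unit_vec (u : 'cV[R]_3) : Prop := (u^T *m u) 0 0 = 1.

Definition sym_posdef (A : 'M[R]_3) : Prop :=
  A^T = A /\ forall x : 'cV[R]_3, x != 0 -> 0 < (x^T *m A *m x) 0 0.

Definition unit_eigvec (A : 'M[R]_3) (w : 'cV[R]_3) : Prop :=
  unit_vec w /\ exists lam : R, A *m w = lam *: w.

Definition PsiV (A : 'M[R]_3) (Q : 'M[R]_3) : Prop :=
  Q = 1 \/ exists w, unit_eigvec A w /\ Q = Ra pi w.

Definition Tmap (u : 'cV[R]_3) (Q : 'M[R]_3) (th : R) : 'M[R]_3 := Q *m Ra th u.

Definition Ufun (A : 'M[R]_3) (u : 'cV[R]_3) (gam : R) (Q : 'M[R]_3) (th : R) : R :=
  \tr (A *m (1 - Tmap u Q th)) + gam / 2 * th ^+ 2.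

Definition mx_is_deriv m n (F : R -> 'M[R]_(m, n)) (t : R) (F' : 'M[R]_(m, n)) : Prop :=
  forall i j, is_derive t (1 : R) (fun s => F s i j) (F' i j).

(* G is the Riemannian gradient in Q of f(., th) on SO(3) at Q, for the metric
   <Q W1, Q W2>_Q = tr(W1^T W2): G is tangent at Q, and for every curve c in
   SO(3) through Q at s = 0 with velocity c', d/ds f(c s, th) at 0 = <G, c'>_Q. *)
Definition is_gradR (f : 'M[R]_3 -> R -> R) (Q : 'M[R]_3) (th : R) (G : 'M[R]_3) : Prop :=
  (exists W : 'M[R]_3, W^T = - W /\ G = Q *m W) /\
  forall (c : R -> 'M[R]_3) (c' : 'M[R]_3),
    (forall s, SO3 (c s)) -> c 0 = Q -> mx_is_deriv c 0 c' ->
    is_derive (0 : R) (1 : R) (fun s => f (c s) th) (\tr ((Q^T *m G)^T *m (Q^T *m c'))).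

(* the gradient nabla_R f(Q, th) (chosen among the gradients; unique on SO(3)) *)
Definition gradR (f : 'M[R]_3 -> R -> R) (Q : 'M[R]_3) (th : R) : 'M[R]_3 :=
  xget 0 [set G | is_gradR f Q th G].

Definition critical (f : 'M[R]_3 -> R -> R) (Q : 'M[R]_3) (th : R) : Prop :=
  gradR f Q th = 0 /\ is_derive th (1 : R) (fun s => f Q s) 0.

End Defs.

From HB Require Import structures.
From mathcomp Require Import all_boot all_order all_algebra.
From mathcomp Require Import all_classical all_reals all_analysis.
From mathcomp Require Import ring lra.
Import Order.TTheory GRing.Theory Num.Theory.
Import numFieldNormedType.Exports.
Set Implicit Arguments. Unset Strict Implicit. Unset Printing Implicit Defensive.
Local Open Scope ring_scope.
(** The gradient of U in R is R skew(R_a A R), with skew B = (B - B^T)/2: along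
    a curve c in SO(3) through R, U changes at rate -tr(A c' R_a), which is the
    pairing of c' with that matrix, and the pairing determines the gradient
    because the curves R R_a(s, e_k) reach every tangent direction. As
    psi(skew B) = psi B and psi is equivariant under rotations,
    psi(R^T grad_R U) = psi(R_a A R) = R_a psi(A T). Items 1, 3 and 5 then follow
    from the product rule, d/dtheta R_a = R_a u^x, psi(B x^x) = E(B) x and
    psi(x^x B) = E(B) x - psi(B)^x x.
    At a critical point psi(A T) = 0, hence gamma theta = 0 and A R is symmetric.
    Then R - R^T anticommutes with A, which for positive definite A forces R to be
    symmetric; a symmetric rotation is I or 2 w w^T - 1 = R_a(pi, w), and
    commuting with A makes w an eigenvector of A. *)

Arguments mc : simpl never.
Arguments vc : simpl never.

Lemma mx3_mc (R : realType) (A : 'M[R]_3) (i j : 'I_3) : A i j = mc A i j.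
Proof. by rewrite /mc !inord_val. Qed.

Lemma cV3_vc (R : realType) (x : 'cV[R]_3) (i : 'I_3) (j : 'I_1) : x i j = vc x i.
Proof. by rewrite /vc inord_val (ord1 j). Qed.

Lemma eq_ord3 (i j : 'I_3) : (i == j) = (val i == val j).
Proof. by []. Qed.

Ltac expand3 := rewrite /vc /mc /mxtrace ?mxE;
  repeat rewrite ?big_ord_recl ?big_ord0 ?mxE;
  rewrite ?eq_ord3 ?mx3_mc ?cV3_vc /bump /= ?inordK //=.

Ltac ring3 := expand3; first [ring | apply/subr0_eq; ring
  | field; by rewrite ?pnatr_eq0 | apply/subr0_eq; field; by rewrite ?pnatr_eq0].

Ltac mx3_ring := apply/matrixP => -[[|[|[|?]]] ?] -[[|[|[|?]]] ?] //; ring3.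

Section CrossPsi.
Variable R : realType.
Implicit Types (A B M Q : 'M[R]_3) (x y u : 'cV[R]_3).

Definition skew_part B := 2^-1 *: (B - B^T).

Definition minor2 M :=
  mc M 0 0 * mc M 1 1 - mc M 0 1 * mc M 1 0 + mc M 0 0 * mc M 2 2
  - mc M 0 2 * mc M 2 0 + mc M 1 1 * mc M 2 2 - mc M 1 2 * mc M 2 1.

Lemma det3E M : \det M =
  mc M 0 0 * (mc M 1 1 * mc M 2 2 - mc M 1 2 * mc M 2 1)
  - mc M 0 1 * (mc M 1 0 * mc M 2 2 - mc M 1 2 * mc M 2 0)
  + mc M 0 2 * (mc M 1 0 * mc M 2 1 - mc M 1 1 * mc M 2 0).
Proof.
rewrite (expand_det_row _ ord0) !big_ord_recl big_ord0 /cofactor.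
rewrite !(expand_det_row _ ord0) !big_ord_recl !big_ord0 /cofactor !det_mx11 !mxE.
rewrite ?mx3_mc /bump /=; ring.
Qed.

Lemma cayley_hamilton3 M :
  M *m M *m M - \tr M *: (M *m M) + minor2 M *: M - \det M *: 1 = 0.
Proof. rewrite det3E /minor2; mx3_ring. Qed.

Lemma crossmD x y : crossm (x + y) = crossm x + crossm y.
Proof. rewrite /crossm; mx3_ring. Qed.

Lemma crossmZ a x : crossm (a *: x) = a *: crossm x.
Proof. rewrite /crossm; mx3_ring. Qed.

Lemma crossm0 : crossm 0 = 0 :> 'M[R]_3.
Proof. by rewrite -(scale0r 0) crossmZ scale0r. Qed.

Lemma trmx_crossm x : (crossm x)^T = - crossm x.
Proof. rewrite /crossm; mx3_ring. Qed.

Lemma mxtrace_crossm x : \tr (crossm x) = 0.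
Proof. rewrite /crossm; ring3. Qed.

Lemma psi_crossm x : psi (crossm x) = x.
Proof. rewrite /psi /crossm; mx3_ring. Qed.

Lemma crossm_inj : injective (@crossm R).
Proof. by move=> x y /(congr1 (@psi R)); rewrite !psi_crossm. Qed.

Lemma psiD A B : psi (A + B) = psi A + psi B.
Proof. rewrite /psi; mx3_ring. Qed.

Lemma psiZ a A : psi (a *: A) = a *: psi A.
Proof. rewrite /psi; mx3_ring. Qed.

Lemma psi0 : psi 0 = 0 :> 'cV[R]_3.
Proof. by rewrite -(scale0r 0) psiZ scale0r. Qed.

Lemma psi_trmx A : psi A^T = - psi A.
Proof. rewrite /psi; mx3_ring. Qed.

Lemma skew_partE B : skew_part B = crossm (psi B).
Proof. rewrite /skew_part /psi /crossm; mx3_ring. Qed.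

Lemma psi_skew_part B : psi (skew_part B) = psi B.
Proof. by rewrite skew_partE psi_crossm. Qed.

Lemma skew_part_id W : W^T = - W -> skew_part W = W.
Proof. by move=> WT; apply/matrixP => i j; rewrite /skew_part WT opprK !mxE; field. Qed.

Lemma psi_eq0 B : psi B = 0 <-> B^T = B.
Proof.
split=> [psiB0 | BT].
  have /eqP : skew_part B = 0 by rewrite skew_partE psiB0 crossm0.
  by rewrite scaler_eq0 invr_eq0 pnatr_eq0 subr_eq0 eq_sym => /eqP.
by apply: crossm_inj; rewrite -skew_partE /skew_part BT subrr scaler0 crossm0.
Qed.

Lemma psi_mulmx_crossm B x : psi (B *m crossm x) = Emat B *m x.
Proof. rewrite /psi /crossm /Emat; mx3_ring. Qed.

Lemma psi_crossm_mulmx B u :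
  psi (crossm u *m B) = Emat B *m u - crossm (psi B) *m u.
Proof. rewrite /psi /crossm /Emat; mx3_ring. Qed.

Lemma mxtrace_mulmx_crossm B u : \tr (B *m crossm u) = - 2 * (u^T *m psi B) 0 0.
Proof. rewrite /psi /crossm; ring3. Qed.

Lemma crossm_anticomm A x :
  A *m crossm x + crossm x *m A^T = crossm (\tr A *: x - A^T *m x).
Proof. rewrite /crossm; mx3_ring. Qed.
End CrossPsi.

Section Rotations.
Variable R : realType.
Implicit Types (A B M Q : 'M[R]_3) (x y u w : 'cV[R]_3).

Lemma crossm_sqr x : crossm x *m crossm x = x *m x^T - (x^T *m x) 0 0 *: 1.
Proof. rewrite /crossm; mx3_ring. Qed.

Lemma mxtrace_crossm_congr A x :
  \tr ((crossm x)^T *m A *m crossm x) = (x^T *m x) 0 0 * \tr A - (x^T *m A *m x) 0 0.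
Proof. rewrite /crossm; ring3. Qed.

Lemma crossm_conj M x : M^T *m crossm (M *m x) *m M = \det M *: crossm x.
Proof. rewrite det3E /crossm; mx3_ring. Qed.

Lemma SO3_tr Q : SO3 Q -> SO3 Q^T.
Proof. by case=> QTQ detQ; split; [rewrite trmxK; exact: mulmx1C | rewrite det_tr]. Qed.

Lemma SO3_mul P Q : SO3 P -> SO3 Q -> SO3 (P *m Q).
Proof.
case=> PTP detP [QTQ detQ]; split; last by rewrite det_mulmx detP detQ mulr1.
by rewrite trmx_mul mulmxA -(mulmxA _ P^T) PTP mulmx1 QTQ.
Qed.

Lemma SO3_1 : SO3 (1 : 'M[R]_3).
Proof. by split; rewrite ?trmx1 ?mulmx1 ?det1. Qed.

Lemma SO3_crossm_conj Q x : SO3 Q -> Q *m crossm x *m Q^T = crossm (Q *m x).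
Proof.
case=> QTQ detQ; have := crossm_conj Q^T (Q *m x).
by rewrite trmxK mulmxA QTQ mul1mx det_tr detQ scale1r.
Qed.

Lemma psi_SO3_conj Q B : SO3 Q -> psi (Q *m B *m Q^T) = Q *m psi B.
Proof.
move=> SO3Q; rewrite -psi_skew_part.
have -> : skew_part (Q *m B *m Q^T) = Q *m skew_part B *m Q^T.
  by rewrite /skew_part !trmx_mul trmxK mulmxA -scalemxAr -scalemxAl mulmxBr mulmxBl.
by rewrite skew_partE SO3_crossm_conj // psi_crossm.
Qed.

Lemma Ra0 u : Ra 0 u = 1.
Proof. by rewrite /Ra sin0 cos0 subrr !scale0r !addr0. Qed.

Lemma Ra_pi w : unit_vec w -> Ra pi w = 2 *: (w *m w^T) - 1.
Proof.
move=> unit_w; rewrite /Ra sinpi cospi scale0r addr0 crossm_sqr unit_w scale1r.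
apply/matrixP => i j; rewrite !mxE; ring.
Qed.

Lemma Ra_fix th u : Ra th u *m u = u.
Proof. rewrite /Ra /crossm; mx3_ring. Qed.

Lemma Ra_crossm th u : unit_vec u ->
  Ra th u *m crossm u = cos th *: crossm u + sin th *: (crossm u *m crossm u).
Proof.
move=> unit_u.
have -> : Ra th u *m crossm u = (1 - (1 - cos th) * (u^T *m u) 0 0) *: crossm u
    + sin th *: (crossm u *m crossm u) by rewrite /Ra /crossm; mx3_ring.
by rewrite unit_u mulr1; congr (_ *: _ + _); ring.
Qed.

Lemma Ra_SO3 th u : unit_vec u -> SO3 (Ra th u).
Proof.
move=> unit_u; split.
  have -> : (Ra th u)^T *m Ra th u = 1 + (2 * (1 - cos th) - sin th ^+ 2
      - (u^T *m u) 0 0 * (1 - cos th) ^+ 2) *: (crossm u *m crossm u).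
    by rewrite /Ra /crossm; mx3_ring.
  by rewrite unit_u mul1r sin2cos2 [X in X *: _](_ : _ = 0) ?scale0r ?addr0 //; ring.
have -> : \det (Ra th u) = (1 - (1 - cos th) * (u^T *m u) 0 0) ^+ 2
    + sin th ^+ 2 * (u^T *m u) 0 0.
  by rewrite det3E /Ra /crossm; ring3.
by rewrite unit_u !mulr1 sin2cos2; ring.
Qed.

Lemma Ra_tr_fix th u : unit_vec u -> (Ra th u)^T *m u = u.
Proof.
by move=> unit_u; rewrite -{2}(Ra_fix th u) mulmxA (proj1 (Ra_SO3 th unit_u)) mul1mx.
Qed.

End Rotations.

Lemma mxtrace_tmul_eq0 (R : realDomainType) m n (M : 'M[R]_(m, n)) :
  \tr (M^T *m M) = 0 -> M = 0.
Proof.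
move=> tr0; apply/matrixP => k i; rewrite mxE.
have sq_ge0 (x : R) : 0 <= x * x by rewrite -expr2 sqr_ge0.
have diag_ge0 j : 0 <= (M^T *m M) j j.
  by rewrite mxE; apply: sumr_ge0 => l _; rewrite !mxE.
have /eqP := psumr_eq0P (fun j _ => diag_ge0 j) tr0 (i := i) isT.
rewrite mxE psumr_eq0 => [/allP/(_ k (mem_index_enum k)) | l _]; last by rewrite !mxE.
by rewrite /= !mxE mulf_eq0 orbb => /eqP.
Qed.

Section PsiV.
Variable R : realType.
Implicit Types (A B M P Q : 'M[R]_3) (x y u w : 'cV[R]_3).

Lemma posdef_mxtrace_congr_eq0 A n (M : 'M[R]_(3, n)) :
  sym_posdef A -> \tr (M^T *m A *m M) = 0 -> M = 0.
Proof.
case=> _ posA tr0.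
have diagE k : (M^T *m A *m M) k k = ((col k M)^T *m A *m col k M) 0 0.
  rewrite !mxE; apply: eq_bigr => j _; rewrite !mxE; congr (_ * _).
  by apply: eq_bigr => i _; rewrite !mxE.
have diag_ge0 k : 0 <= (M^T *m A *m M) k k.
  rewrite diagE; have [-> | nz] := eqVneq (col k M) 0; first by rewrite mulmx0 mxE.
  exact/ltW/posA.
have col0 k : col k M = 0.
  apply: contra_eq (psumr_eq0P (fun k _ => diag_ge0 k) tr0 (i := k) isT) => nz.
  by rewrite diagE gt_eqF ?posA.
by apply/matrixP => i k; have := congr1 (fun c : 'cV[R]_3 => c i 0) (col0 k); rewrite !mxE.
Qed.

Lemma posdef_anticomm_crossm A x :
  sym_posdef A -> A *m crossm x + crossm x *m A = 0 -> x = 0.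
Proof.
move=> posA anti; have AT := proj1 posA.
have Ax : A *m x = \tr A *: x.
  move: anti; rewrite -{2}AT crossm_anticomm AT -crossm0 => /crossm_inj /eqP.
  by rewrite subr_eq0 eq_sym => /eqP.
have /posdef_mxtrace_congr_eq0 : \tr ((crossm x)^T *m A *m crossm x) = 0.
  by rewrite mxtrace_crossm_congr -mulmxA Ax -scalemxAr [X in _ - X]mxE mulrC subrr.
by move=> /(_ posA) /(congr1 (@psi R)); rewrite psi_crossm psi0.
Qed.

Lemma SO3_sym_posdef_mulmx A Q :
  sym_posdef A -> SO3 Q -> (A *m Q)^T = A *m Q -> Q^T = Q.
Proof.
move=> posA [QTQ _] AQ_sym; have AT := proj1 posA; have QQT := mulmx1C QTQ.
have AQ : A *m Q = Q^T *m A by rewrite -AQ_sym trmx_mul AT.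
have QA : Q *m A = A *m Q^T.
  by rewrite -[Q *m A]mulmx1 -QQT mulmxA -(mulmxA Q) AQ mulmxA QQT mul1mx.
apply/psi_eq0/(posdef_anticomm_crossm posA).
rewrite -skew_partE /skew_part -scalemxAr -scalemxAl -scalerDr.
by rewrite mulmxBr mulmxBl AQ QA addrA subrK subrr scaler0.
Qed.

Lemma commute_dyad_eigvec A w : unit_vec w ->
  A *m (w *m w^T) = w *m w^T *m A -> A *m w = (w^T *m A *m w) 0 0 *: w.
Proof.
move=> unit_w comm; have wTw : w^T *m w = 1%:M by rewrite [LHS]mx11_scalar unit_w.
rewrite -[A *m w]mulmx1 -wTw mulmxA -(mulmxA A) comm -!mulmxA (mulmxA w^T).
by rewrite {1}[w^T *m A *m w]mx11_scalar mul_mx_scalar.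
Qed.

Lemma sym_idempotent_tr1 P : P^T = P -> P *m P = P -> \tr P = 1 ->
  exists2 w, unit_vec w & P = w *m w^T.
Proof.
move=> PT PP trP.
have [j Pjj_neq0] : exists j, P j j != 0.
  case: (pickP (fun j => P j j != 0)) => [j ? | all0]; first by exists j.
  move: trP; rewrite /mxtrace big1 => [/esym/eqP | j _]; first by rewrite oner_eq0.
  by apply/eqP/negbFE/all0.
pose c := col j P; pose C := c *m c^T.
have cTc : (c^T *m c) 0 0 = P j j.
  rewrite -[in RHS]PP -[in RHS]PT !mxE; apply: eq_bigr => i _; rewrite !mxE.
  by congr (_ * _); rewrite -[in RHS]PT mxE.
have Pjj_gt0 : 0 < P j j.
  rewrite lt_def Pjj_neq0 -cTc mxE; apply: sumr_ge0 => i _.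
  by rewrite !mxE -expr2 sqr_ge0.
have Pc : P *m c = c by rewrite /c colE mulmxA PP.
have cTP : c^T *m P = c^T by rewrite -[in LHS]PT -trmx_mul Pc.
have cTc1 : c^T *m c = (P j j)%:M by rewrite [LHS]mx11_scalar cTc.
pose M := P - (P j j)^-1 *: C.
have MT : M^T = M by rewrite /M linearB /= linearZ /= PT /C trmx_mul trmxK.
have MM : M *m M = M.
  rewrite /M mulmxBl !mulmxBr PP -!scalemxAr -!scalemxAl /C !mulmxA Pc.
  rewrite -(mulmxA c c^T P) cTP -(mulmxA c c^T c) cTc1 mul_mx_scalar -scalemxAl scalerA.
  by rewrite scalerA divfK // subrr subr0.
have M0 : M = 0.
  apply: mxtrace_tmul_eq0; rewrite MT MM /M linearB /= trP mxtraceZ /C mxtrace_mulC.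
  by rewrite cTc1 mxtrace_scalar mulr1n mulVf // subrr.
have sqrt_Pjj : Num.sqrt (P j j) ^+ 2 = P j j by rewrite sqr_sqrtr // ltW.
exists ((Num.sqrt (P j j))^-1 *: c).
  rewrite /unit_vec [(_ *: c)^T]linearZ /= -scalemxAl -scalemxAr scalerA mxE cTc.
  by rewrite -invfM -expr2 sqrt_Pjj mulVf.
rewrite [(_ *: c)^T]linearZ /= -scalemxAl -scalemxAr scalerA -invfM -expr2 sqrt_Pjj.
by apply/eqP; rewrite -subr_eq0 -/C -/M M0.
Qed.

Lemma sym_SO3 Q : SO3 Q -> Q^T = Q ->
  Q = 1 \/ exists2 w, unit_vec w & Q = 2 *: (w *m w^T) - 1.
Proof.
move=> [QTQ detQ] QT; have QQ : Q *m Q = 1 by rewrite -{1}QT.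
(* Cayley-Hamilton, using Q^2 = 1 and det Q = 1 *)
have CH : (1 + minor2 Q) *: Q = (1 + \tr Q) *: 1.
  apply/eqP; rewrite -subr_eq0; apply/eqP.
  rewrite -(cayley_hamilton3 Q) QQ mul1mx detQ scale1r.
  by apply/matrixP => i j; rewrite !mxE; ring.
have [m2_eq0 | m2_neq0] := eqVneq (1 + minor2 Q) 0; [right | left].
  have trQ : \tr Q = -1.
    move/eqP: CH; rewrite m2_eq0 scale0r eq_sym scaler_eq0 oner_eq0 orbF.
    by rewrite addrC addr_eq0 => /eqP.
  pose P := 2^-1 *: (Q + 1).
  have [w unit_w Pw] : exists2 w, unit_vec w & P = w *m w^T.
    apply: sym_idempotent_tr1.
    - by rewrite /P linearZ /= linearD /= QT trmx1.
    - rewrite /P -scalemxAl -scalemxAr scalerA mulmxDl !mulmxDr QQ mul1mx !mulmx1.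
      by apply/matrixP => i j; rewrite !mxE; field.
    - by rewrite /P mxtraceZ mxtraceD mxtrace1 trQ; field.
  by exists w => //; rewrite -Pw /P scalerA mulfV ?pnatr_eq0 // scale1r addrK.
set lam := (1 + \tr Q) / (1 + minor2 Q).
have Qlam : Q = lam *: 1.
  by apply: (scalerI m2_neq0); rewrite CH scalerA mulrC divfK.
have lam2 : lam ^+ 2 = 1.
  have := congr1 (fun M : 'M[R]_3 => M 0 0) QQ.
  by rewrite Qlam scalemx1 -scalar_mxM !mxE eqxx /= mulr1n expr2.
have lam3 : lam ^+ 3 = 1 by rewrite -detQ Qlam scalemx1 det_scalar.
have lam1 : lam = 1 by rewrite -lam3 exprS lam2 mulr1.
by rewrite Qlam lam1 scale1r.
Qed.

Lemma PsiV_sym_mulmx A Q : A^T = A -> PsiV A Q -> (A *m Q)^T = A *m Q.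
Proof.
move=> AT [-> | [w [[unit_w [lam Aw]] ->]]]; first by rewrite mulmx1.
have wTA : w^T *m A = lam *: w^T by rewrite -[A]AT -trmx_mul Aw linearZ.
have comm : A *m (w *m w^T) = w *m w^T *m A.
  by rewrite mulmxA Aw -mulmxA wTA -scalemxAl -scalemxAr.
rewrite Ra_pi // trmx_mul AT linearB /= [(_ *: _)^T]linearZ /= trmx1 trmx_mul trmxK.
by rewrite mulmxBl mulmxBr mul1mx mulmx1 -scalemxAl -scalemxAr comm.
Qed.

Lemma psi_mulmx_eq0_PsiV A Q :
  sym_posdef A -> SO3 Q -> psi (A *m Q) = 0 <-> PsiV A Q.
Proof.
move=> posA SO3Q; split=> [/psi_eq0 AQ_sym | /(PsiV_sym_mulmx (proj1 posA))/psi_eq0 //].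
have QT := SO3_sym_posdef_mulmx posA SO3Q AQ_sym.
have AQ : A *m Q = Q *m A by rewrite -{1}AQ_sym trmx_mul (proj1 posA) QT.
case: (sym_SO3 SO3Q QT) => [-> | [w unit_w Qw]]; [by left | right].
exists w; split; last by rewrite Ra_pi.
split=> //; exists ((w^T *m A *m w) 0 0); apply: commute_dyad_eigvec => //.
move: AQ; rewrite Qw mulmxBr mulmxBl mulmx1 mul1mx -scalemxAr -scalemxAl.
by move=> /addIr /(scalerI _); apply; rewrite pnatr_eq0.
Qed.

End PsiV.

Section MatrixDerivative.
Variable R : realType.
Implicit Types (t : R) (f g : R -> R).

Lemma eq_is_derive f g t d : is_derive t 1 f d -> f =1 g -> is_derive t 1 g d.
Proof. by move=> df /funext <-. Qed.

Lemma is_derive_unique f t d1 d2 : is_derive t 1 f d1 -> is_derive t 1 f d2 -> d1 = d2.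
Proof. by move=> [_ <-] [_ <-]. Qed.

Lemma is_derive_mulr f g t df dg : is_derive t 1 f df -> is_derive t 1 g dg ->
  is_derive t 1 (fun s => f s * g s) (df * g t + f t * dg).
Proof.
move=> df_ dg_; apply: is_derive_eq (is_deriveM df_ dg_) _.
by rewrite /GRing.scale /= addrC mulrC [_ * dg]mulrC.
Qed.

Variables m n p : nat.

Lemma mx_is_deriv_cst (M : 'M[R]_(m, n)) t : mx_is_deriv (fun _ => M) t 0.
Proof. by move=> i j; rewrite mxE; apply: is_derive_cst. Qed.

Lemma eq_mx_is_deriv (F G : R -> 'M[R]_(m, n)) t F' :
  mx_is_deriv F t F' -> F =1 G -> mx_is_deriv G t F'.
Proof. by move=> dF /funext <-. Qed.

Lemma mx_is_derivD (F G : R -> 'M[R]_(m, n)) t F' G' :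
  mx_is_deriv F t F' -> mx_is_deriv G t G' ->
  mx_is_deriv (fun s => F s + G s) t (F' + G').
Proof.
move=> dF dG i j; rewrite mxE.
by apply: eq_is_derive (is_deriveD (dF i j) (dG i j)) _ => s; rewrite mxE.
Qed.

Lemma mx_is_derivN (F : R -> 'M[R]_(m, n)) t F' :
  mx_is_deriv F t F' -> mx_is_deriv (fun s => - F s) t (- F').
Proof.
by move=> dF i j; rewrite mxE; apply: eq_is_derive (is_deriveN (dF i j)) _ => s; rewrite mxE.
Qed.

Lemma mx_is_derivB (F G : R -> 'M[R]_(m, n)) t F' G' :
  mx_is_deriv F t F' -> mx_is_deriv G t G' ->
  mx_is_deriv (fun s => F s - G s) t (F' - G').
Proof. by move=> dF dG; apply: mx_is_derivD dF (mx_is_derivN dG). Qed.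

Lemma mx_is_derivZ (a : R -> R) (F : R -> 'M[R]_(m, n)) t a' F' :
  is_derive t 1 a a' -> mx_is_deriv F t F' ->
  mx_is_deriv (fun s => a s *: F s) t (a' *: F t + a t *: F').
Proof.
move=> da dF i j; rewrite !mxE.
by apply: eq_is_derive (is_derive_mulr da (dF i j)) _ => s; rewrite mxE.
Qed.

Lemma mx_is_derivM (F : R -> 'M[R]_(m, n)) (G : R -> 'M[R]_(n, p)) t F' G' :
  mx_is_deriv F t F' -> mx_is_deriv G t G' ->
  mx_is_deriv (fun s => F s *m G s) t (F' *m G t + F t *m G').
Proof.
move=> dF dG i j; rewrite !mxE -big_split /=.
have dFG k : is_derive t 1 (fun s => F s i k * G s k j)
    (F' i k * G t k j + F t i k * G' k j) by exact: is_derive_mulr.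
by apply: eq_is_derive (is_derive_sum dFG) _ => s; rewrite fct_sumE mxE.
Qed.

Lemma mx_is_derivT (F : R -> 'M[R]_(m, n)) t F' :
  mx_is_deriv F t F' -> mx_is_deriv (fun s => (F s)^T) t F'^T.
Proof. by move=> dF i j; rewrite mxE; apply: eq_is_derive (dF j i) _ => s; rewrite mxE. Qed.

Lemma mx_is_deriv_unique (F : R -> 'M[R]_(m, n)) t F1 F2 :
  mx_is_deriv F t F1 -> mx_is_deriv F t F2 -> F1 = F2.
Proof.
by move=> dF1 dF2; apply/matrixP => i j; apply: is_derive_unique (dF1 i j) (dF2 i j).
Qed.

Lemma mx_is_deriv0_cst (F : R -> 'M[R]_(m, n)) :
  (forall t, mx_is_deriv F t 0) -> forall s, F s = F 0.
Proof.
move=> dF0 s; apply/matrixP => i j; apply: (@is_derive_0_is_cst _ (fun s => F s i j)) => t.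
by have := dF0 t i j; rewrite mxE.
Qed.

Lemma is_derive_mxtrace (F : R -> 'M[R]_n) t F' :
  mx_is_deriv F t F' -> is_derive t 1 (fun s => \tr (F s)) (\tr F').
Proof.
by move=> dF; apply: eq_is_derive (is_derive_sum (fun k => dF k k)) _ => s; rewrite fct_sumE.
Qed.

End MatrixDerivative.

Section RotationDerivative.
Variable R : realType.
Implicit Types (t : R).

Lemma mx_is_deriv_psi (F : R -> 'M[R]_3) t F' :
  mx_is_deriv F t F' -> mx_is_deriv (fun s => psi (F s)) t (psi F').
Proof.
move=> dF i j; rewrite mxE.
have dmc a b : is_derive t 1 (fun s => mc (F s) a b) (mc F' a b) by apply: dF.
have dpsi a b c d : is_derive t 1 (fun s => 2^-1 * (mc (F s) a b - mc (F s) c d))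
    (2^-1 * (mc F' a b - mc F' c d)).
  have := is_derive_mulr (is_derive_cst (2^-1 : R) t 1) (is_deriveB (dmc a b) (dmc c d)).
  by rewrite mul0r add0r => /eq_is_derive; apply.
by case: i => -[|[|[|?]]] ? //=; apply: eq_is_derive (dpsi _ _ _ _) _ => s; rewrite mxE.
Qed.

Lemma mx_is_deriv_Ra u (th : R -> R) t v : unit_vec u -> is_derive t 1 th v ->
  mx_is_deriv (fun s => Ra (th s) u) t (v *: (Ra (th t) u *m crossm u)).
Proof.
move=> unit_u dth.
have dsin : is_derive t 1 (sin \o th) (cos (th t) * v) by apply: is_derive1_comp.
have dcos : is_derive t 1 (fun s => 1 - cos (th s)) (0 - (- sin (th t) * v)).
  by apply: is_deriveB; apply: is_derive1_comp.
have := mx_is_derivD (mx_is_derivD (mx_is_deriv_cst 1 t)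
  (mx_is_derivZ dsin (mx_is_deriv_cst (crossm u) t)))
  (mx_is_derivZ dcos (mx_is_deriv_cst (crossm u *m crossm u) t)).
rewrite Ra_crossm // !scaler0 !addr0 add0r sub0r mulNr opprK.
by rewrite scalerDr !scalerA [v * _]mulrC [v * _]mulrC; apply.
Qed.

End RotationDerivative.

Section Gradient.
Variable R : realType.
Implicit Types (A B Q : 'M[R]_3) (u : 'cV[R]_3) (gam th : R).

Definition gradU A u Q th := Q *m skew_part (Ra th u *m A *m Q).

Lemma is_derive_Ufun_curve A u gam th (c : R -> 'M[R]_3) c' :
  mx_is_deriv c 0 c' ->
  is_derive (0 : R) (1 : R) (fun s => Ufun A u gam (c s) th) (- \tr (A *m (c' *m Ra th u))).
Proof.
move=> dc.
have dT := is_derive_mxtrace (mx_is_derivM (mx_is_deriv_cst A 0)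
  (mx_is_derivB (mx_is_deriv_cst 1 0) (mx_is_derivM dc (mx_is_deriv_cst (Ra th u) 0)))).
have := is_deriveD dT (is_derive_cst (gam / 2 * th ^+ 2) (0 : R) (1 : R)).
by rewrite mul0mx add0r sub0r mulmx0 !addr0 mulmxN linearN => /eq_is_derive; apply.
Qed.

Lemma SO3_curve_skew (c : R -> 'M[R]_3) c' : (forall s, SO3 (c s)) ->
  mx_is_deriv c 0 c' -> ((c 0)^T *m c')^T = - ((c 0)^T *m c').
Proof.
move=> SO3c dc.
have d1 : mx_is_deriv (fun s => (c s)^T *m c s) 0 0.
  by apply: eq_mx_is_deriv (mx_is_deriv_cst 1 0) _ => s; rewrite (proj1 (SO3c s)).
have /eqP := mx_is_deriv_unique (mx_is_derivM (mx_is_derivT dc) dc) d1.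
by rewrite addr_eq0 trmx_mul trmxK => /eqP.
Qed.

Lemma is_gradR_Ufun A u gam Q th : SO3 Q ->
  is_gradR (Ufun A u gam) Q th (gradU A u Q th).
Proof.
case=> QTQ _; split.
  exists (skew_part (Ra th u *m A *m Q)); split=> //.
  by rewrite /skew_part linearZ /= linearB /= trmxK -scalerN opprB.
move=> c c' SO3c c0 dc.
apply: is_derive_eq (is_derive_Ufun_curve A u gam th dc) _.
have W_skew := SO3_curve_skew SO3c dc; rewrite c0 in W_skew.
rewrite /gradU (mulmxA Q^T Q) QTQ mul1mx.
set M := Ra th u *m A *m Q; set W := Q^T *m c'.
have trMW : \tr (M *m W) = \tr (A *m (c' *m Ra th u)).
  by rewrite /M /W -!mulmxA (mulmxA Q) (mulmx1C QTQ) mul1mx mxtrace_mulC -mulmxA.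
have trMTW : \tr (M^T *m W) = - \tr (M *m W).
  by rewrite -mxtrace_tr trmx_mul trmxK W_skew mulNmx linearN /= mxtrace_mulC.
rewrite /skew_part linearZ /= linearB /= trmxK -scalemxAl mulmxBl linearZ /= linearB /=.
by rewrite trMTW trMW; field.
Qed.

Lemma is_gradR_unique (f : 'M[R]_3 -> R -> R) Q th G1 G2 : SO3 Q ->
  is_gradR f Q th G1 -> is_gradR f Q th G2 -> G1 = G2.
Proof.
move=> SO3Q [[W1 [W1T ->]] dG1] [[W2 [W2T ->]] dG2]; congr (_ *m _).
rewrite -(skew_part_id W1T) -(skew_part_id W2T) !skew_partE; congr crossm.
apply/matrixP => k i; rewrite [i]ord1.
pose e : 'cV[R]_3 := delta_mx k 0.
have unit_e : unit_vec e by rewrite /unit_vec /e trmx_delta mul_delta_mx mxE !eqxx.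
have coord W : \tr (W^T *m crossm e) = 2 * psi W k 0.
  by rewrite mxtrace_mulmx_crossm psi_trmx /e trmx_delta mulmxN -rowE !mxE; ring.
pose c s := Q *m Ra s e.
have SO3c s : SO3 (c s) by apply: SO3_mul SO3Q (Ra_SO3 s unit_e).
have c0 : c 0 = Q by rewrite /c Ra0 mulmx1.
have dc : mx_is_deriv c 0 (Q *m crossm e).
  have := mx_is_derivM (mx_is_deriv_cst Q 0) (mx_is_deriv_Ra unit_e (is_derive_id (0 : R) (1 : R))).
  by rewrite mul0mx add0r scale1r Ra0 mul1mx.
have := is_derive_unique (dG1 c _ SO3c c0 dc) (dG2 c _ SO3c c0 dc).
rewrite !(mulmxA Q^T Q) (proj1 SO3Q) !mul1mx !coord.
by apply: mulfI; rewrite pnatr_eq0.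
Qed.

Lemma gradR_Ufun A u gam Q th :
  SO3 Q -> gradR (Ufun A u gam) Q th = gradU A u Q th.
Proof.
move=> SO3Q; have grad := is_gradR_Ufun A u gam th SO3Q.
exact: is_gradR_unique SO3Q (xgetI 0 grad) grad.
Qed.

Lemma psi_Ra_mulmx A u Q th : unit_vec u ->
  psi (Ra th u *m A *m Q) = Ra th u *m psi (A *m Tmap u Q th).
Proof.
move=> unit_u; have SO3Ra := Ra_SO3 th unit_u.
rewrite -(psi_SO3_conj _ SO3Ra) /Tmap.
by rewrite !mulmxA -(mulmxA _ (Ra th u)) (mulmx1C (proj1 SO3Ra)) mulmx1.
Qed.

Lemma psi_body_gradU A u Q th : SO3 Q -> unit_vec u ->
  psi (Q^T *m gradU A u Q th) = Ra th u *m psi (A *m Tmap u Q th).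
Proof.
by move=> [QTQ _] unit_u; rewrite /gradU mulmxA QTQ mul1mx psi_skew_part psi_Ra_mulmx.
Qed.

Lemma gradU_eq0 A u Q th : SO3 Q -> unit_vec u ->
  gradU A u Q th = 0 <-> psi (A *m Tmap u Q th) = 0.
Proof.
move=> [QTQ _] unit_u; have [RaTRa _] := Ra_SO3 th unit_u.
split=> [grad0 | psiAT0]; last first.
  by rewrite /gradU skew_partE psi_Ra_mulmx // psiAT0 mulmx0 crossm0 mulmx0.
have : psi (Ra th u *m A *m Q) = 0.
  move: grad0 => /(congr1 (mulmx Q^T)); rewrite /gradU mulmxA QTQ mul1mx mulmx0.
  by move/(congr1 (@psi R)); rewrite psi_skew_part psi0.
rewrite psi_Ra_mulmx // => /(congr1 (mulmx (Ra th u)^T)).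
by rewrite mulmxA RaTRa mul1mx mulmx0.
Qed.

Lemma is_derive_Ufun_theta A u gam Q th : unit_vec u ->
  is_derive th (1 : R) (fun s => Ufun A u gam Q s)
    (gam * th + 2 * (u^T *m psi (A *m Tmap u Q th)) 0 0).
Proof.
move=> unit_u.
have dT := is_derive_mxtrace (mx_is_derivM (mx_is_deriv_cst A th)
  (mx_is_derivB (mx_is_deriv_cst 1 th)
    (mx_is_derivM (mx_is_deriv_cst Q th) (mx_is_deriv_Ra unit_u (is_derive_id th 1))))).
have dsq := is_derive_mulr (is_derive_cst (gam / 2) th 1)
  (is_derive_mulr (is_derive_id th 1) (is_derive_id th 1)).
have := is_deriveD dT dsq.
rewrite mul0mx add0r sub0r mul0mx add0r scale1r mulmxN linearN /= !mulmxA.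
rewrite mxtrace_mulmx_crossm => /is_derive_eq dU.
apply: eq_is_derive (dU _ _) _ => [|s //].
by field.
Qed.

Lemma critical_Ufun A u gam Q th :
  sym_posdef A -> unit_vec u -> 0 < gam -> SO3 Q ->
  critical (Ufun A u gam) Q th <-> PsiV A Q /\ th = 0.
Proof.
move=> posA unit_u gam_gt0 SO3Q; rewrite /critical gradR_Ufun //.
have dU := is_derive_Ufun_theta A gam Q th unit_u.
split=> [[/(@gradU_eq0 A u Q th SO3Q unit_u) psiAT0 dU0] | [PsiVQ th0]].
  have th0 : th = 0.
    move: (is_derive_unique dU0 dU).
    rewrite psiAT0 mulmx0 mxE mulr0 addr0 => /esym/eqP.
    by rewrite mulf_eq0 gt_eqF //= => /eqP.
  split=> //; apply/psi_mulmx_eq0_PsiV => //.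
  by move: psiAT0; rewrite th0 /Tmap Ra0 mulmx1.
have psiAT0 : psi (A *m Tmap u Q th) = 0.
  by rewrite th0 /Tmap Ra0 mulmx1; apply/psi_mulmx_eq0_PsiV.
split; first exact/(@gradU_eq0 A u Q th SO3Q unit_u).
by apply: is_derive_eq dU _; rewrite psiAT0 th0 mulmx0 mxE !mulr0 addr0.
Qed.

End Gradient.

Section Trajectories.
Variable R : realType.
Implicit Types (A Q : 'M[R]_3) (u w : 'cV[R]_3) (gam t v : R).

Lemma is_derive_det_mulmx (F : R -> 'M[R]_3) t X :
  mx_is_deriv F t (F t *m X) ->
  is_derive t 1 (fun s => \det (F s)) (\det (F t) * \tr X).
Proof.
move=> dF.
have d a b : is_derive t 1 (fun s => mc (F s) a b) (mc (F t *m X) a b) by apply: dF.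
have dminor a b c e :
    is_derive t 1 (fun s => mc (F s) 1 a * mc (F s) 2 b - mc (F s) 1 c * mc (F s) 2 e) _
  := is_deriveB (is_derive_mulr (d 1 a) (d 2 b)) (is_derive_mulr (d 1 c) (d 2 e)).
have := is_deriveD (is_deriveB (is_derive_mulr (d 0 0) (dminor 1 2 2 1))
  (is_derive_mulr (d 0 1) (dminor 0 2 2 0))) (is_derive_mulr (d 0 2) (dminor 0 1 1 0)).
move=> /is_derive_eq dDet; apply: eq_is_derive (dDet _ _) _ => [|s]; last by rewrite det3E.
by rewrite det3E; ring3.
Qed.

Lemma traj_SO3 (Rt : R -> 'M[R]_3) (om : R -> 'cV[R]_3) : SO3 (Rt 0) ->
  (forall t, mx_is_deriv Rt t (Rt t *m crossm (om t))) -> forall t, SO3 (Rt t).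
Proof.
move=> [R0TR0 detR0] dR t; split.
  apply: mulmx1C; rewrite (@mx_is_deriv0_cst _ _ _ (fun s => Rt s *m (Rt s)^T)).
    exact: mulmx1C.
  move=> s; have := mx_is_derivM (dR s) (mx_is_derivT (dR s)).
  by rewrite trmx_mul trmx_crossm mulNmx mulmxN !mulmxA subrr.
rewrite -detR0; apply: (@is_derive_0_is_cst _ (fun s => \det (Rt s))) => s.
by apply: is_derive_eq (is_derive_det_mulmx (dR s)) _; rewrite mxtrace_crossm mulr0.
Qed.

Lemma mx_is_deriv_Tmap u (Rt : R -> 'M[R]_3) (th : R -> R) t w v :
  unit_vec u -> mx_is_deriv Rt t (Rt t *m crossm w) -> is_derive t 1 th v ->
  mx_is_deriv (fun s => Tmap u (Rt s) (th s)) t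
    (Tmap u (Rt t) (th t) *m crossm ((Ra (th t) u)^T *m w + v *: u)).
Proof.
move=> unit_u dR dth; have SO3Ra := Ra_SO3 (th t) unit_u.
suff -> : Tmap u (Rt t) (th t) *m crossm ((Ra (th t) u)^T *m w + v *: u)
    = Rt t *m crossm w *m Ra (th t) u + Rt t *m (v *: (Ra (th t) u *m crossm u)).
  exact: mx_is_derivM dR (mx_is_deriv_Ra unit_u dth).
rewrite crossmD crossmZ mulmxDr -(SO3_crossm_conj _ (SO3_tr SO3Ra)) trmxK /Tmap.
congr (_ + _); last by rewrite -!scalemxAr mulmxA.
by rewrite !mulmxA -(mulmxA (Rt t) (Ra _ _)) (mulmx1C (proj1 SO3Ra)) mulmx1.
Qed.

Lemma mx_is_deriv_psi_body_grad A u gam (Rt : R -> 'M[R]_3) (th : R -> R) t w v :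
  unit_vec u -> (forall s, SO3 (Rt s)) ->
  mx_is_deriv Rt t (Rt t *m crossm w) -> is_derive t 1 th v ->
  mx_is_deriv (fun s => psi ((Rt s)^T *m gradR (Ufun A u gam) (Rt s) (th s))) t
    ((Ra (th t) u *m Emat (A *m Tmap u (Rt t) (th t)) *m (Ra (th t) u)^T) *m w
     + v *: (Ra (th t) u *m Emat (A *m Tmap u (Rt t) (th t)) *m u
             - crossm (Ra (th t) u *m psi (A *m Tmap u (Rt t) (th t))) *m u)).
Proof.
move=> unit_u SO3R dR dth; have SO3Ra := Ra_SO3 (th t) unit_u.
have RRaT := mulmx1C (proj1 SO3Ra).
set Rr := Ra (th t) u; set Q := Rt t; set B := A *m Tmap u Q (th t).
suff -> : Rr *m Emat B *m Rr^T *m w + v *: (Rr *m Emat B *m u - crossm (Rr *m psi B) *m u)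
    = psi ((v *: (Rr *m crossm u) *m A + Rr *m 0) *m Q + Rr *m A *m (Q *m crossm w)).
  apply: eq_mx_is_deriv (mx_is_deriv_psi (mx_is_derivM
    (mx_is_derivM (mx_is_deriv_Ra unit_u dth) (mx_is_deriv_cst A t)) dR)) _ => s.
  by rewrite gradR_Ufun // mulmxA (proj1 (SO3R s)) mul1mx psi_skew_part.
have conjw : Rr *m A *m (Q *m crossm w) = Rr *m (B *m crossm (Rr^T *m w)) *m Rr^T.
  rewrite -(SO3_crossm_conj _ (SO3_tr SO3Ra)) trmxK /B /Tmap !mulmxA.
  by rewrite -!(mulmxA _ Rr Rr^T) RRaT !mulmx1.
have conju : v *: (Rr *m crossm u) *m A *m Q = v *: (Rr *m (crossm u *m B) *m Rr^T).
  by rewrite /B /Tmap -!scalemxAl !mulmxA -!(mulmxA _ Rr Rr^T) RRaT !mulmx1.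
have crossm_Rr : crossm (Rr *m psi B) *m u = Rr *m (crossm (psi B) *m u).
  by rewrite -(SO3_crossm_conj _ SO3Ra) -!mulmxA Ra_tr_fix.
rewrite mulmx0 addr0 psiD conjw conju psiZ !psi_SO3_conj //.
by rewrite psi_mulmx_crossm psi_crossm_mulmx crossm_Rr mulmxBr !mulmxA addrC.
Qed.

End Trajectories.

Theorem lemma2 (R : realType) (A : 'M[R]_3) (u : 'cV[R]_3) (gam : R) :
  sym_posdef A -> unit_vec u -> 0 < gam ->
  let U := Ufun A u gam in
  (* items 1 and 5: along trajectories dR/dt = R omega^x, dtheta/dt = v *)
  (forall (Rt : R -> 'M[R]_3) (th : R -> R) (om : R -> 'cV[R]_3) (v : R -> R),
     SO3 (Rt 0) ->
     (forall t, mx_is_deriv Rt t (Rt t *m crossm (om t))) ->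
     (forall t, is_derive t (1 : R) th (v t)) ->
     forall t,
       let Rat := Ra (th t) u in
       let Tt := Tmap u (Rt t) (th t) in
       mx_is_deriv (fun s => Tmap u (Rt s) (th s)) t
                   (Tt *m crossm ((Rat)^T *m om t + v t *: u))
       /\
       mx_is_deriv (fun s => psi ((Rt s)^T *m gradR U (Rt s) (th s))) t
         ((Rat *m Emat (A *m Tt) *m (Rat)^T) *m om t
          + v t *: (Rat *m Emat (A *m Tt) *m u
                    - crossm (Rat *m psi (A *m Tt)) *m u))) /\
  (* items 2 and 3 *)
  (forall (Q : 'M[R]_3) (th : R), SO3 Q ->
     psi (Q^T *m gradR U Q th) = Ra th u *m psi (A *m Tmap u Q th) /\
     is_derive th (1 : R) (fun s => U Q s)
       (gam * th + 2 * (u^T *m psi (A *m Tmap u Q th)) 0 0)) /\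
  (* item 4: Psi_U = Psi_V x {0}, and (I_3, 0) \in Psi_U *)
  (forall (Q : 'M[R]_3) (th : R), SO3 Q ->
     (critical U Q th <-> (PsiV A Q /\ th = 0))) /\
  critical U 1 0.
Proof.
move=> posA unit_u gam_gt0 U; split; [|split; [|split]].
- move=> Rt th om v SO3R0 dR dth t; have SO3R := traj_SO3 SO3R0 dR.
  by split; [exact: mx_is_deriv_Tmap | exact: mx_is_deriv_psi_body_grad].
- move=> Q th SO3Q; rewrite /U gradR_Ufun //.
  by split; [exact: psi_body_gradU | exact: is_derive_Ufun_theta].
- by move=> Q th SO3Q; exact: critical_Ufun.
- apply: (proj2 (critical_Ufun 0 posA unit_u gam_gt0 (SO3_1 R))).
  by split; [left | ].
Qed.
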